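(* Let $(\Lambda,d)$ be a finitely aligned $k$-graph and give $X_\Lambda$ the topology generated by the subbasis $\{D_F,X_\Lambda\setminus D_F:F\in S_\Lambda\}$. Then the set $\partial\Lambda$ of boundary paths is closed in $X_\Lambda$.
   Context: A $k$-graph $(\Lambda,d)$ is a countable small category $\Lambda$ (objects identified with identity morphisms) with a functor $d:\Lambda\to\mathbb N^k$ satisfying unique factorization: whenever $d(\lambda)=m+n$ there are unique $\mu,\nu$ with $d(\mu)=m$, $d(\nu)=n$, $\lambda=\mu\nu$. $\Lambda^0=d^{-1}(0)$, $r,s$ range/source, $v\Lambda=r^{-1}(v)$. $\Lambda^{\min}(\lambda,\mu)=\{(\alpha,\beta):\lambda\alpha=\mu\beta,\ d(\lambda\alpha)=d(\lambda)\vee d(\mu)\}$; finitely aligned means all are finite. $E\subseteq v\Lambda$ is exhaustive if every $\mu\in v\Lambda$ has some $\lambda\in E$ with $\Lambda^{\min}(\lambda,\mu)\ne\emptyset$; $v\mathrm{FE}(\Lambda)$ = finite exhaustive subsets of $v\Lambda$. $S_\Lambda$ is the set of finite $F\subseteq\{(\lambda,\mu):s(\lambda)=s(\mu)\}$ such that distinct $(\lambda,\mu),(\nu,\omega)\in F$ satisfy $\Lambda^{\min}(\lambda,\nu)=\Lambda^{\min}(\mu,\omega)=\emptyset$. $\Omega_{k,m}$ ($m\in(\mathbb N\cup\{\infty\})^k$): objects $\{p\in\mathbb N^k:p\le m\}$, morphisms $(p,q)$ with $p\le q\le m$, $r(p,q)=p$, $s(p,q)=q$, $d(p,q)=q-p$.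 $X_\Lambda$ = all degree-preserving functors $x:\Omega_{k,m}\to\Lambda$; $d(x)=m$, $x(n)=x(n,n)$. $D_F=\{x:\exists(\lambda,\mu)\in F,\ d(\mu)\le d(x),\ x(0,d(\mu))=\mu\}$. $x\in X_\Lambda$ is a boundary path if for all $n\in\mathbb N^k$ with $n\le d(x)$ and all $E\in x(n)\mathrm{FE}(\Lambda)$ there is $\lambda\in E$ with $x(n,n+d(\lambda))=\lambda$; $\partial\Lambda$ is the set of boundary paths. *)

From mathcomp Require Import all_boot.
From Stdlib Require List.
Set Implicit Arguments. Unset Strict Implicit. Unset Printing Implicit Defensive.

Definition Nk (k : nat) := {ffun 'I_k -> nat}.
Definition zeroNk k : Nk k := [ffun _ => 0].
Definition addNk k (m n : Nk k) : Nk k := [ffun i => m i + n i].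
Definition subNk k (m n : Nk k) : Nk k := [ffun i => m i - n i].
Definition joinNk k (m n : Nk k) : Nk k := [ffun i => maxn (m i) (n i)].
Definition leNk k (m n : Nk k) : Prop := forall i, m i <= n i.

(* (N u {oo})^k : None stands for oo *)
Definition Nkinf (k : nat) := 'I_k -> option nat.
Definition leNkinf k (p : Nk k) (m : Nkinf k) : Prop :=
  forall i, if m i is Some a then p i <= a else true.

Record kgraph (k : nat) := KGraph {
  Obj : Type;
  Mor : Type;
  src : Mor -> Obj;
  rng : Mor -> Obj;
  idm : Obj -> Mor;
  comp : Mor -> Mor -> Mor;   (* comp a b = a b, meaningful when src a = rng b *)
  deg : Mor -> Nk k;
  src_id : forall v, src (idm v) = v;
  rng_id : forall v, rng (idm v) = v;
  src_comp : forall a b, src a = rng b -> src (comp a b) = src b;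
  rng_comp : forall a b, src a = rng b -> rng (comp a b) = rng a;
  comp_id_l : forall a, comp (idm (rng a)) a = a;
  comp_id_r : forall a, comp a (idm (src a)) = a;
  comp_assoc : forall a b c, src a = rng b -> src b = rng c ->
    comp (comp a b) c = comp a (comp b c);
  countable_mor : exists f : Mor -> nat, injective f;
  deg_id : forall v, deg (idm v) = zeroNk k;
  deg_comp : forall a b, src a = rng b -> deg (comp a b) = addNk (deg a) (deg b);
  fact_ex : forall a m n, deg a = addNk m n ->
    exists b c, src b = rng c /\ deg b = m /\ deg c = n /\ a = comp b c;
  fact_uniq : forall b c b' c', src b = rng c -> src b' = rng c' ->
    deg b = deg b' -> deg c = deg c' -> comp b c = comp b' c' ->
    b = b' /\ c = c'
}.

Section KG.
Variables (k : nat) (L : kgraph k).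

Definition Lmin (a b : Mor L) (p : Mor L * Mor L) : Prop :=
  src a = rng p.1 /\ src b = rng p.2 /\ comp a p.1 = comp b p.2 /\
  deg (comp a p.1) = joinNk (deg a) (deg b).

Definition finitely_aligned : Prop :=
  forall a b, exists l : seq (Mor L * Mor L), forall p, Lmin a b p -> List.In p l.

Definition FE (v : Obj L) (E : seq (Mor L)) : Prop :=
  (forall a, List.In a E -> rng a = v) /\
  forall mu, rng mu = v -> exists a, List.In a E /\ exists p, Lmin a mu p.

Definition in_S (F : seq (Mor L * Mor L)) : Prop :=
  (forall pr, List.In pr F -> src pr.1 = src pr.2) /\
  forall a b, List.In a F -> List.In b F -> a <> b ->
    (forall p, ~ Lmin a.1 b.1 p) /\ (forall p, ~ Lmin a.2 b.2 p).

Record prepath := PrePath { pdeg : Nkinf k; pmor : Nk k -> Nk k -> Mor L }.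

(* x is a degree-preserving functor Omega_{k,m} -> Lambda *)
Definition is_path (x : prepath) : Prop :=
  (forall p q, leNk p q -> leNkinf q (pdeg x) -> deg (pmor x p q) = subNk q p) /\
  (forall p, leNkinf p (pdeg x) -> pmor x p p = idm (rng (pmor x p p))) /\
  (forall p q t, leNk p q -> leNk q t -> leNkinf t (pdeg x) ->
     src (pmor x p q) = rng (pmor x q t) /\
     pmor x p t = comp (pmor x p q) (pmor x q t)).

Definition pobj (x : prepath) (n : Nk k) : Obj L := rng (pmor x n n).

Definition D (F : seq (Mor L * Mor L)) (x : prepath) : Prop :=
  exists pr, List.In pr F /\ leNkinf (deg pr.2) (pdeg x) /\
    pmor x (zeroNk k) (deg pr.2) = pr.2.

Definition boundary (x : prepath) : Prop :=
  is_path x /\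
  forall n, leNkinf n (pdeg x) -> forall E, FE (pobj x n) E ->
    exists a, List.In a E /\ leNkinf (addNk n (deg a)) (pdeg x) /\
      pmor x n (addNk n (deg a)) = a.

(* subbasic set: (F, true) is D_F, (F, false) is X_Lambda \ D_F *)
Definition subbasic (c : seq (Mor L * Mor L) * bool) (x : prepath) : Prop :=
  is_path x /\ (if c.2 then D c.1 x else ~ D c.1 x).

(* open sets of the topology on X_Lambda generated by the subbasis
   {D_F, X \ D_F : F in S_Lambda}: unions of finite intersections *)
Definition open_X (U : prepath -> Prop) : Prop :=
  (forall x, U x -> is_path x) /\
  forall x, U x -> exists l : seq (seq (Mor L * Mor L) * bool),
    (forall c, List.In c l -> in_S c.1) /\
    (forall c, List.In c l -> subbasic c x) /\
    (forall y, is_path y -> (forall c, List.In c l -> subbasic c y) -> U y).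

Definition closed_X (C : prepath -> Prop) : Prop :=
  open_X (fun x => is_path x /\ ~ C x).

End KG.

(* If x is not a boundary path, there are n <= d(x) and a finite exhaustive
   E in x(n)FE(Lambda) such that x(n, n + d(a)) <> a for every a in E.  Write
   Z(nu) = D_{{(nu,nu)}} and mu = x(0,n).  Then Z(mu) minus the sets Z(mu a),
   a in E, is a basic neighbourhood of x missing the boundary: a path y in it
   has y(0,n) = mu, so y(n) = x(n), and by unique factorisation
   y(n, n + d(a)) = a would put y in Z(mu a). *)
From Pilot Require Import Defs.
From Stdlib Require Import Classical_Prop.
From mathcomp Require Import all_boot.

Set Implicit Arguments.
Unset Strict Implicit.
Unset Printing Implicit Defensive.

Section NkOrder.
Variable k : nat.

Lemma le0Nk (p : Nk k) : leNk (zeroNk k) p.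
Proof. by move=> i; rewrite ffunE. Qed.

Lemma leNkk (p : Nk k) : leNk p p.
Proof. by []. Qed.

Lemma leNk_addr (p q : Nk k) : leNk p (addNk p q).
Proof. by move=> i; rewrite ffunE leq_addr. Qed.

Lemma subNk0 (p : Nk k) : subNk p (zeroNk k) = p.
Proof. by apply/ffunP=> i; rewrite !ffunE subn0. Qed.

Lemma addKNk (p q : Nk k) : subNk (addNk p q) p = q.
Proof. by apply/ffunP=> i; rewrite !ffunE addKn. Qed.

End NkOrder.

Section CylinderSets.
Variables (k : nat) (L : kgraph k).

Definition cyl (nu : Mor L) : seq (Mor L * Mor L) := [:: (nu, nu)].

Definition follows_at (x : prepath L) (n : Nk k) (a : Mor L) : Prop :=
  leNkinf (addNk n (deg a)) (pdeg x) /\ pmor x n (addNk n (deg a)) = a.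

Lemma in_S_cyl (nu : Mor L) : in_S (cyl nu).
Proof.
split; first by move=> pr [<-|[]].
by move=> a b [<-|[]] [<-|[]].
Qed.

Lemma D_cylP (nu : Mor L) (x : prepath L) :
  D (cyl nu) x <-> leNkinf (deg nu) (pdeg x) /\ pmor x (zeroNk k) (deg nu) = nu.
Proof.
split; first by case=> pr [[<-|[]] /=].
by move=> nu_x; exists (nu, nu); split; first left.
Qed.

Lemma not_boundary_witness (x : prepath L) : is_path x -> ~ boundary x ->
  exists n, leNkinf n (pdeg x) /\ exists E, FE (pobj x n) E /\
    forall a, List.In a E -> ~ follows_at x n a.
Proof.
move=> Px nBx; apply: NNPP => no_witness; apply: nBx; split=> // n Hn E FE_E.
apply: NNPP => no_a; apply: no_witness; exists n; split=> //; exists E.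
by split=> // a Ea x_a; apply: no_a; exists a.
Qed.

Section OnePath.
Variables (x : prepath L) (Px : is_path x).

Lemma path_deg0 (n : Nk k) :
  leNkinf n (pdeg x) -> deg (pmor x (zeroNk k) n) = n.
Proof. by move=> Hn; rewrite Px.1 ?subNk0 //; apply: le0Nk. Qed.

Lemma path_src0 (n : Nk k) :
  leNkinf n (pdeg x) -> src (pmor x (zeroNk k) n) = pobj x n.
Proof. by move=> Hn; case: (Px.2.2 _ _ _ (le0Nk n) (leNkk n) Hn). Qed.

Lemma path_comp0 (n m : Nk k) : leNkinf (addNk n m) (pdeg x) ->
  src (pmor x (zeroNk k) n) = rng (pmor x n (addNk n m)) /\
  pmor x (zeroNk k) (addNk n m) =
    Defs.comp (pmor x (zeroNk k) n) (pmor x n (addNk n m)).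
Proof. exact: Px.2.2 (le0Nk n) (leNk_addr n m). Qed.

(* Unique factorisation of x(0, n + d(a)) at n is what makes [cyl] detect
   the segment x(n, n + d(a)). *)
Lemma follows_at_cyl_comp (mu a : Mor L) :
  leNkinf (deg mu) (pdeg x) -> pmor x (zeroNk k) (deg mu) = mu ->
  rng a = src mu ->
  follows_at x (deg mu) a <-> D (cyl (Defs.comp mu a)) x.
Proof.
move=> Hmu x_mu ra; rewrite D_cylP deg_comp //.
split=> -[Hle x_eq]; have [s_eq c_eq] := path_comp0 Hle; rewrite x_mu in s_eq c_eq.
  by rewrite c_eq x_eq.
split=> //; rewrite x_eq in c_eq.
have deg_seg : deg (pmor x (deg mu) (addNk (deg mu) (deg a))) = deg a.
  by rewrite Px.1 ?addKNk //; apply: leNk_addr.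
by case: (fact_uniq s_eq (esym ra) (erefl _) deg_seg (esym c_eq)).
Qed.

End OnePath.

Definition boundary_free_nbhd (mu : Mor L) (E : seq (Mor L)) :
    seq (seq (Mor L * Mor L) * bool) :=
  (cyl mu, true) :: map (fun a => (cyl (Defs.comp mu a), false)) E.

Lemma in_S_boundary_free_nbhd (mu : Mor L) (E : seq (Mor L)) c :
  List.In c (boundary_free_nbhd mu E) -> in_S c.1.
Proof.
case=> [<-|/List.in_map_iff [a [<- _]]]; exact: in_S_cyl.
Qed.

End CylinderSets.

Theorem lemma5p12 (k : nat) (L : kgraph k) :
  finitely_aligned L -> closed_X (boundary (L:=L)).
Proof.
move=> _; split; first by move=> x [].
move=> x [Px nBx].
have [n [Hn [E [FE_E not_follows]]]] := not_boundary_witness Px nBx.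
set mu := pmor x (zeroNk k) n.
have deg_mu : deg mu = n by apply: path_deg0.
have src_mu : src mu = pobj x n by apply: path_src0.
have rng_E a : List.In a E -> rng a = src mu by rewrite src_mu; apply: FE_E.1.
exists (boundary_free_nbhd mu E); split; first exact: in_S_boundary_free_nbhd.
split.
  move=> c [<-|/List.in_map_iff [a [<- Ea]]]; split=> //=.
    by apply/D_cylP; rewrite deg_mu.
  by rewrite -(follows_at_cyl_comp Px) ?deg_mu //; [apply: not_follows | apply: rng_E].
move=> y Py y_nbhd; split=> // -[_ By].
have [Hny y_mu] : leNkinf n (pdeg y) /\ pmor y (zeroNk k) n = mu.
  by rewrite -deg_mu; apply/D_cylP; case: (y_nbhd _ (or_introl erefl)).
have FE_y : FE (pobj y n) E by rewrite -(path_src0 Py Hny) y_mu src_mu.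
have [a [Ea y_a]] := By n Hny E FE_y.
have [_] := y_nbhd (cyl (Defs.comp mu a), false) (or_intror (List.in_map _ _ _ Ea)).
by apply; rewrite -(follows_at_cyl_comp Py) ?deg_mu ?y_mu //; apply: rng_E.
Qed.
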